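(* Let $\lambda\in\mathbb{R}$, let $r\ge s\ge1$ and $n\ge1$ be integers, and let $k\ge0$ be an integer. Then \[ \frac{(-1)^k}{k!}\sum_{p=0}^{k}(-1)^p\binom{k}{p}\bigg(\prod_{j=1}^{n}\big[(p+(j-1)(r-s))_s-(n-j)\lambda\big]\bigg)= \begin{cases} S_\lambda^{(r,s)}(n,k), & \text{if } 0\le k\le ns,\\ 0, & \text{if } k>ns. \end{cases} \]
   Context: Notation: $(x)_0=1$, $(x)_m=x(x-1)\cdots(x-m+1)$ for $m\ge1$. Let $D=\frac{d}{dx}$ and let $x$ also denote the operator of multiplication by $x$. The generalized degenerate $(r,s)$-Stirling numbers of the second kind $S_\lambda^{(r,s)}(n,k)$, $0\le k\le ns$, are defined by the operator identity \[ \prod_{k=0}^{n-1}\Big(x^{r}D^{s}-k\lambda\, x^{r-s}\Big)=x^{n(r-s)}\sum_{k=0}^{ns}S_\lambda^{(r,s)}(n,k)\,x^{k}D^{k}, \] where the product of operators is written with the factors $k=0,1,\dots,n-1$ from left to right. *)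

From mathcomp Require Import all_boot all_order all_algebra.
Set Implicit Arguments. Unset Strict Implicit. Unset Printing Implicit Defensive.
Import Order.TTheory GRing.Theory Num.Theory.
Local Open Scope ring_scope.

(* Operators act on polynomials {poly R}; x = multiplication by 'X, D = deriv. *)

Definition stir_factor (R : nzRingType) (lam : R) (r s k : nat) (p : {poly R})
  : {poly R} :=
  'X^r * p^`(s) - (k%:R * lam) *: ('X^(r - s) * p).

(* The operator product  prod_{k=0}^{n-1} (x^r D^s - k lam x^(r-s)),
   factors written left to right k = 0, ..., n-1, i.e. the composition
   F_0 o F_1 o ... o F_(n-1) (so F_(n-1) is applied first). *)
Definition stir_opprod (R : nzRingType) (lam : R) (r s n : nat) (p : {poly R})
  : {poly R} :=
  foldr (fun k q => stir_factor lam r s k q) p (iota 0 n).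

Definition stir_normal (R : nzRingType) (r s n : nat) (S : nat -> R)
  (p : {poly R}) : {poly R} :=
  'X^(n * (r - s)) * \sum_(k < (n * s).+1) S k *: ('X^k * p^`(k)).

(* S (indexed by k, 0 <= k <= ns) are the generalized degenerate (r,s)-Stirling
   numbers of the second kind S_lam^{(r,s)}(n, k): the operator identity holds. *)
Definition is_gen_deg_stirling2 (R : nzRingType) (lam : R) (r s n : nat)
  (S : nat -> R) : Prop :=
  forall p : {poly R}, stir_opprod lam r s n p = stir_normal r s n S p.

Definition stir_formula (R : fieldType) (lam : R) (r s n k : nat) : R :=
  ((-1) ^+ k / (k`!)%:R) *
  \sum_(0 <= p < k.+1)
     ((-1) ^+ p * ('C(k, p))%:R *
      \prod_(1 <= j < n.+1)
        ((((p + (j - 1) * (r - s)) ^_ s)%N)%:R - ((n - j)%N)%:R * lam)).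

(* Applying the operator product to [x^m] multiplies it by [x^(n(r-s))] and by
   the weight [G(m)], the product occurring in the formula, whereas the
   normal-ordered form multiplies it by [x^(n(r-s))] and by
   [sum_k S(n,k) (m)_k]. Hence [G(m) = sum_(k <= ns) S(n,k) (m)_k] for every
   [m], and the sum of the formula, being [(-1)^k] times the [k]-th forward
   difference of [G] at [0], extracts [(-1)^k k! S(n,k)] because the [k]-th
   difference of [(m)_j] at [0] is [k!] if [j = k] and [0] otherwise. For
   [k > ns] the difference vanishes since [G] is a polynomial in [m] of
   degree at most [ns]. *)

From mathcomp Require Import all_boot all_order all_algebra.
From mathcomp Require Import zify.
Set Implicit Arguments. Unset Strict Implicit. Unset Printing Implicit Defensive.
Import Order.TTheory GRing.Theory Num.Theory.
Local Open Scope ring_scope.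

Lemma ffactS_pascal p j : (p.+1 ^_ j = p ^_ j + j * p ^_ j.-1)%N.
Proof.
case: j => [|j] //=; rewrite ffactSS ffactnSr.
have [lt_pj|le_jp] := ltnP p j; first by rewrite ffact_small // !muln0.
by rewrite [in RHS]mulnC -mulnDl; congr (_ * _)%N; lia.
Qed.

(* [(-1)^k] times the [k]-th forward difference of [f] at [0]. *)
Definition alt_diff (R : pzRingType) (k : nat) (f : nat -> R) : R :=
  \sum_(0 <= p < k.+1) (-1) ^+ p * ('C(k, p))%:R * f p.

Section AltDiff.
Variable R : pzRingType.
Implicit Types f g : nat -> R.

Lemma eq_alt_diff k f g : f =1 g -> alt_diff k f = alt_diff k g.
Proof. by move=> fg; apply: eq_bigr => p _; rewrite fg. Qed.

Lemma alt_diffB k f g :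
  alt_diff k (fun p => f p - g p) = alt_diff k f - alt_diff k g.
Proof. by rewrite /alt_diff -sumrB; apply: eq_bigr => p _; rewrite mulrBr. Qed.

Lemma alt_diffMn k f j : alt_diff k (fun p => f p *+ j) = alt_diff k f *+ j.
Proof. by rewrite /alt_diff -sumrMnl; apply: eq_bigr => p _; rewrite -mulrnAr. Qed.

Lemma alt_diffMl k (a : R) f :
  alt_diff k (fun p => a * f p) = a * alt_diff k f.
Proof.
rewrite /alt_diff mulr_sumr; apply: eq_bigr => p _.
by rewrite !mulrA -(mulrA _ _ a) -(commr_nat a) mulrA -(commr_sign a).
Qed.

Lemma alt_diff_sum k (I : Type) (r : seq I) (F : I -> nat -> R) :
  alt_diff k (fun p => \sum_(i <- r) F i p) = \sum_(i <- r) alt_diff k (F i).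
Proof.
rewrite /alt_diff exchange_big; apply: eq_bigr => p _.
by rewrite mulr_sumr.
Qed.

Lemma alt_diffS k f :
  alt_diff k.+1 f = alt_diff k f - alt_diff k (fun p => f p.+1).
Proof.
have -> : alt_diff k f = \sum_(0 <= p < k.+2) (-1) ^+ p * ('C(k, p))%:R * f p.
  by rewrite big_nat_recr //= bin_small // mulr0 mul0r addr0.
rewrite /alt_diff big_nat_recl // [in RHS]big_nat_recl // !bin0 -addrA.
congr (_ + _); under eq_bigr => p _ do rewrite binS natrD mulrDr mulrDl.
rewrite big_split /= -sumrN; congr (_ + _); apply: eq_bigr => p _.
by rewrite exprS mulN1r !mulNr.
Qed.

Lemma alt_diff_ffact k j :
  alt_diff k (fun p => (p ^_ j)%:R) = (j == k)%:R * ((-1) ^+ k * (k`!)%:R) :> R.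
Proof.
elim: k j => [|k IH] j.
  by rewrite /alt_diff big_nat1 ffact0n expr0 bin0 !mul1r mulr1.
rewrite alt_diffS -opprB -alt_diffB.
under eq_alt_diff => p do
  rewrite ffactS_pascal natrD addrAC subrr add0r mulnC natrM mulr_natr.
rewrite alt_diffMn IH; case: j => [|j] /=; first by rewrite mulr0n oppr0 mul0r.
rewrite eqSS; case: eqP => [->|_]; last by rewrite !mul0r mul0rn oppr0.
by rewrite !mul1r factS natrM exprS mulN1r mulNr -mulrnAr -mulr_natl.
Qed.
End AltDiff.

Lemma alt_diff_ffact_sum (R : pzRingType) k N (a : nat -> R) : (k < N)%N ->
  alt_diff k (fun p => \sum_(j < N) a j * (p ^_ j)%:R) =
  a k * ((-1) ^+ k * (k`!)%:R).
Proof.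
move=> ltkN; rewrite alt_diff_sum.
under eq_bigr => j _ do rewrite alt_diffMl alt_diff_ffact.
rewrite (bigD1 (Ordinal ltkN)) //= eqxx mul1r big1 ?addr0 // => j /negbTE neq_jk.
by rewrite -val_eqE /= in neq_jk; rewrite neq_jk mul0r mulr0.
Qed.

Lemma size_shift_subr (R : idomainType) (q : {poly R}) :
  (size (q \Po ('X + 1) - q)%R <= (size q).-1)%N.
Proof.
have size_shift : size (q \Po ('X + 1)) = size q.
  by rewrite size_comp_poly2 // size_XaddC.
have lead_shift : lead_coef (q \Po ('X + 1)) = lead_coef q.
  by rewrite lead_coef_comp ?size_XaddC // -polyC1 lead_coefXaddC expr1n mulr1.
apply/leq_sizeP => j le_j; rewrite coefB.
have [le_qj|lt_jq] := leqP (size q) j.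
  by rewrite !nth_default ?size_shift ?subr0.
have -> : j = (size q).-1 by lia.
by rewrite -lead_coefE -{1}size_shift -lead_coefE lead_shift subrr.
Qed.

Lemma alt_diff_poly (R : idomainType) k (q : {poly R}) :
  (size q <= k)%N -> alt_diff k (fun p => q.[p%:R]) = 0.
Proof.
elim: k q => [|k IH] q.
  rewrite leqn0 size_poly_eq0 => /eqP ->.
  by rewrite /alt_diff big_nat1 horner0 mulr0.
move=> size_q; rewrite alt_diffS -opprB -alt_diffB.
have shift p : q.[p.+1%:R] - q.[p%:R] = (q \Po ('X + 1) - q).[p%:R].
  by rewrite hornerD hornerN horner_comp hornerD hornerX hornerC natr1.
rewrite (eq_alt_diff _ shift) IH ?oppr0 //.
by apply: leq_trans (size_shift_subr q) _; lia.
Qed.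

Lemma size_prod_leq (R : nzSemiRingType) (I : Type) (r : seq I)
    (F : I -> {poly R}) d :
  (forall i, size (F i) <= d.+1)%N ->
  (size (\prod_(i <- r) F i)%R <= size r * d + 1)%N.
Proof.
move=> size_F; elim: r => [|i r IH]; first by rewrite big_nil size_poly1.
rewrite big_cons; apply: leq_trans (size_polyMleq _ _) _.
by have := size_F i; move: IH => /=; lia.
Qed.

Definition ffactp (R : nzRingType) (j : nat) : {poly R} :=
  \prod_(0 <= i < j) ('X - (i%:R)%:P).

Lemma size_ffactp (R : nzRingType) j : size (ffactp R j) = j.+1.
Proof. by rewrite size_prod_XsubC size_iota subn0. Qed.

Lemma horner_ffactp (R : comNzRingType) j a : (ffactp R j).[a%:R] = (a ^_ j)%:R.
Proof.
rewrite horner_prod; elim: j => [|j IH]; first by rewrite big_geq.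
rewrite big_nat_recr //= IH hornerXsubC ffactnSr natrM.
have [le_ja|lt_aj] := leqP j a; first by rewrite natrB.
by rewrite ffact_small // !mul0r.
Qed.

Definition stir_weight (R : nzRingType) (lam : R) (r s n m : nat) : R :=
  \prod_(1 <= j < n.+1)
     ((((m + (j - 1) * (r - s)) ^_ s)%N)%:R - ((n - j)%N)%:R * lam).

Definition stir_weightp (R : nzRingType) (lam : R) (r s n : nat) : {poly R} :=
  \prod_(1 <= j < n.+1)
     (ffactp R s \Po ('X + (((j - 1) * (r - s))%N)%:R%:P)
      - (((n - j)%N)%:R * lam)%:P).

Lemma horner_stir_weightp (R : comNzRingType) (lam : R) r s n m :
  (stir_weightp lam r s n).[m%:R] = stir_weight lam r s n m.
Proof.
rewrite horner_prod; apply: eq_bigr => j _.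
rewrite hornerD hornerN hornerC horner_comp hornerD hornerX hornerC -natrD.
by rewrite horner_ffactp.
Qed.

Lemma size_stir_weightp (R : nzRingType) (lam : R) r s n :
  (size (stir_weightp lam r s n) <= n * s + 1)%N.
Proof.
rewrite /stir_weightp.
apply: leq_trans (size_prod_leq _ (d := s) _) _ => [j|]; last first.
  by rewrite size_iota subSS subn0.
apply: leq_trans (size_polyD _ _) _; rewrite size_polyN geq_max.
rewrite (leq_trans (size_polyC_leq1 _)) // andbT.
by apply: leq_trans (size_comp_poly_leq _ _) _; rewrite size_XaddC size_ffactp muln1.
Qed.

Lemma coef_stir_normal_Xn (R : nzRingType) r s n (S : nat -> R) m :
  (stir_normal r s n S 'X^m)`_(m + n * (r - s)) =
  \sum_(k < (n * s).+1) S k * (m ^_ k)%:R.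
Proof.
rewrite /stir_normal coefXnM ltnNge leq_addl /= addnK coef_sum.
apply: eq_bigr => k _; rewrite coefZ derivnXn mulrnAr coefMn -exprD.
have [le_km|lt_mk] := leqP k m; first by rewrite subnKC // coefXn eqxx mulr_natr.
by rewrite ffact_small // !mulr0n mulr0.
Qed.

Section StirlingOperator.
Variables (R : comNzRingType) (lam : R) (r s : nat).
Hypothesis le_sr : (s <= r)%N.

Lemma stir_factor_scaleXn a c e :
  stir_factor lam r s a (c *: 'X^e) =
  (c * ((e ^_ s)%:R - a%:R * lam)) *: 'X^(e + (r - s)).
Proof.
rewrite /stir_factor derivnZ derivnXn -scaler_nat scalerA.
rewrite -!scalerAr -!exprD scalerA.
have [lt_es|le_se] := ltnP e s.
  rewrite ffact_small // mulr0 scale0r sub0r (addnC (r - s)%N) -scaleNr.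
  by congr (_ *: _); rewrite sub0r mulrN mulrC.
rewrite (_ : r + (e - s) = e + (r - s))%N; last by lia.
by rewrite (addnC (r - s)%N) -scalerBl mulrBr [c * (_ * lam)]mulrC.
Qed.

Lemma foldr_stir_factor_Xn a l m :
  foldr (fun k q => stir_factor lam r s k q) 'X^m (iota a l) =
  (\prod_(1 <= j < l.+1)
     ((((m + (j - 1) * (r - s)) ^_ s)%N)%:R - ((a + l - j)%N)%:R * lam))
    *: 'X^(m + l * (r - s)).
Proof.
elim: l a => [|l IH] a; first by rewrite big_geq // scale1r mul0n addn0.
rewrite /= IH stir_factor_scaleXn [in RHS]big_nat_recr //=.
by rewrite addSnnS subSS subn0 addnK -addnA -mulSnr.
Qed.

Lemma stir_opprod_Xn n m :
  stir_opprod lam r s n 'X^m = stir_weight lam r s n m *: 'X^(m + n * (r - s)).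
Proof. by rewrite /stir_opprod foldr_stir_factor_Xn add0n. Qed.

Lemma stir_weight_ffact_expansion n (S : nat -> R) m :
  is_gen_deg_stirling2 lam r s n S ->
  stir_weight lam r s n m = \sum_(k < (n * s).+1) S k * (m ^_ k)%:R.
Proof.
move=> /(_ 'X^m) /(congr1 (fun q : {poly R} => q`_(m + n * (r - s))%N)) /=.
by rewrite stir_opprod_Xn coefZ coefXn eqxx mulr1 coef_stir_normal_Xn.
Qed.

End StirlingOperator.

Lemma stir_formulaE (R : fieldType) (lam : R) r s n k :
  stir_formula lam r s n k =
  (-1) ^+ k / (k`!)%:R * alt_diff k (stir_weight lam r s n).
Proof. by []. Qed.

Theorem theorem3 (R : realFieldType) (lam : R) (r s n : nat) :
  (1 <= s)%N -> (s <= r)%N -> (1 <= n)%N ->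
  (forall S : nat -> R, is_gen_deg_stirling2 lam r s n S ->
     forall k : nat, (k <= n * s)%N -> stir_formula lam r s n k = S k)
  /\ (forall k : nat, (n * s < k)%N -> stir_formula lam r s n k = 0).
Proof.
move=> _ le_sr _; split=> [S stirS k le_k_ns | k lt_ns_k]; rewrite stir_formulaE.
- have expand m := stir_weight_ffact_expansion le_sr m stirS.
  rewrite (eq_alt_diff _ expand) alt_diff_ffact_sum ?ltnS //.
  have fact_neq0 : (k`!)%:R != 0 :> R by rewrite pnatr_eq0 -lt0n fact_gt0.
  by rewrite mulrCA mulrACA -exprMn mulrNN mulr1 expr1n mul1r mulVf // mulr1.
- rewrite -(eq_alt_diff _ (horner_stir_weightp lam r s n)) alt_diff_poly ?mulr0 //.
  by apply: leq_trans (size_stir_weightp lam r s n) _; rewrite addn1.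
Qed.
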